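(* Let Assumption 1 hold and let $K_{\mathrm f}\in\mathbb{R}^{1\times 2n}$ be such that $A_{\mathrm f}+B_{\mathrm f}K_{\mathrm f}$ is Hurwitz. If the polynomial $s^n+c_1s^{n-1}+\dots+c_{n-1}s+c_n$ is Hurwitz, then the origin is globally asymptotically stable for the closed-loop system with state $(x,\zeta,\mu)\in\mathbb{R}^{3n}$ given by $\dot x=Ax+Bu$, $\dot\zeta=A_{\mathrm r}\zeta+B_{\mathrm r}u$, $\dot\mu=A_{\mathrm r}\mu+B_{\mathrm r}Cx$, $u=K_{\mathrm f}\,\mathrm{col}(\zeta,\mu)$.
   Context: Fix $n\ge 1$ and real numbers $a_1,\dots,a_n,b_1,\dots,b_n$. The plant is the continuous-time SISO system $y^{(n)}+a_1y^{(n-1)}+\dots+a_ny=b_1u^{(n-1)}+\dots+b_nu$, represented in observability canonical form $\dot x=Ax+Bu$, $y=Cx$, $x(t)\in\mathbb{R}^n$, where $C=[0_{1,n-1}\;1]$, $A$ is the $n\times n$ matrix whose first $n-1$ columns are $\begin{bmatrix}0_{1,n-1}\\ I_{n-1}\end{bmatrix}$ and whose last column is $(-a_n,\dots,-a_1)^\top$, and $B=(b_n,\dots,b_1)^\top$. Assumption 1: the polynomials $s^n+a_1s^{n-1}+\dots+a_n$ and $b_1s^{n-1}+\dots+b_n$ are coprime. For real parameters $c_1,\dots,c_n$, $A_{\mathrm r}\in\mathbb{R}^{n\times n}$ is the matrix whose first $n-1$ rows are $[0_{n-1,1}\;I_{n-1}]$ and whose last row is $(-c_n,\dots,-c_1)$,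 and $B_{\mathrm r}=(0,\dots,0,1)^\top\in\mathbb{R}^n$. Define $A_{\mathrm f}=\begin{bmatrix}A_{\mathrm r}&0_{n,n}\\ L_b& A_a\end{bmatrix}\in\mathbb{R}^{2n\times 2n}$, where $L_b\in\mathbb{R}^{n\times n}$ has all rows zero except the last, which equals $(b_n,\dots,b_1)$, and $A_a\in\mathbb{R}^{n\times n}$ has first $n-1$ rows $[0_{n-1,1}\;I_{n-1}]$ and last row $(-a_n,\dots,-a_1)$; and $B_{\mathrm f}=\mathrm{col}(0_{n-1,1},1,0_{n,1})\in\mathbb{R}^{2n}$. A square matrix is Hurwitz if all its eigenvalues have negative real part; a polynomial is Hurwitz if all its roots have negative real part. *)

From HB Require Import structures.
From mathcomp Require Import all_boot all_order all_algebra.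
From mathcomp Require Import all_classical all_reals all_analysis.
From mathcomp Require Import complex.
Set Implicit Arguments. Unset Strict Implicit. Unset Printing Implicit Defensive.
Import Order.TTheory GRing.Theory Num.Theory.
Import numFieldNormedType.Exports.
Local Open Scope ring_scope.
Local Open Scope classical_set_scope.

Section Defs.
Variable R : realType.

Definition cpoly (p : {poly R}) : {poly R[i]} :=
  map_poly (fun x : R => (x%:C)%C) p.

Definition hurwitz_poly (p : {poly R}) : Prop :=
  forall z : R[i], root (cpoly p) z -> complex.Re z < 0.

Definition hurwitz_mx (N : nat) (M : 'M[R]_N) : Prop :=
  hurwitz_poly (char_poly M).

(* Coefficients: a k, b k, c k stand for a_k, b_k, c_k (k = 1..n). *)
Definition den_poly (n : nat) (a : nat -> R) : {poly R} :=
  'X^n + \sum_(1 <= k < n.+1) (a k)%:P * 'X^(n - k).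
Definition num_poly (n : nat) (b : nat -> R) : {poly R} :=
  \sum_(1 <= k < n.+1) (b k)%:P * 'X^(n - k).

Definition Amat (n : nat) (a : nat -> R) : 'M[R]_n :=
  \matrix_(i < n, j < n)
    (if j == n.-1 :> nat then - a (n - i)%N
     else if i == j.+1 :> nat then 1 else 0).
Definition Bmat (n : nat) (b : nat -> R) : 'cV[R]_n :=
  \col_(i < n) b (n - i)%N.
Definition Cmat (n : nat) : 'rV[R]_n :=
  \row_(j < n) (if j == n.-1 :> nat then 1 else 0).

Definition comp_mx (n : nat) (c : nat -> R) : 'M[R]_n :=
  \matrix_(i < n, j < n)
    (if i == n.-1 :> nat then - c (n - j)%N
     else if j == i.+1 :> nat then 1 else 0).
Definition Ar (n : nat) (c : nat -> R) : 'M[R]_n := comp_mx n c.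
Definition Br (n : nat) : 'cV[R]_n :=
  \col_(i < n) (if i == n.-1 :> nat then 1 else 0).
Definition Lb (n : nat) (b : nat -> R) : 'M[R]_n :=
  \matrix_(i < n, j < n) (if i == n.-1 :> nat then b (n - j)%N else 0).
Definition Aa (n : nat) (a : nat -> R) : 'M[R]_n := comp_mx n a.

Definition Af (n : nat) (a b c : nat -> R) : 'M[R]_(n + n) :=
  block_mx (Ar n c) 0 (Lb n b) (Aa n a).
Definition Bf (n : nat) : 'cV[R]_(n + n) := col_mx (Br n) 0.

Definition is_solution (N : nat) (f : 'cV[R]_N -> 'cV[R]_N) (phi : R -> 'cV[R]_N) : Prop :=
  (forall t : R, 0 < t -> is_derive t 1 phi (f (phi t))) /\
  phi x @[x --> (0:R)^'+] --> phi 0.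

Definition GAS (N : nat) (f : 'cV[R]_N -> 'cV[R]_N) : Prop :=
  (forall eps : R, 0 < eps -> exists2 delta : R, 0 < delta &
     forall phi, is_solution f phi -> `|phi 0| < delta ->
       forall t, 0 <= t -> `|phi t| < eps) /\
  (forall phi, is_solution f phi -> phi t @[t --> +oo] --> (0 : 'cV[R]_N)).

Definition closed_loop (n : nat) (a b c : nat -> R) (Kf : 'M[R]_(1, n + n))
  (z : 'cV[R]_(n + (n + n))) : 'cV[R]_(n + (n + n)) :=
  let x := usubmx z in
  let w := dsubmx z in
  let zeta := usubmx w in
  let mu := dsubmx w in
  let u := Kf *m col_mx zeta mu in
  col_mx (Amat n a *m x + Bmat n b *m u)
         (col_mx (Ar n c *m zeta + Br n *m u)
                 (Ar n c *m mu + Br n *m (Cmat n *m x))).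

End Defs.
Arguments closed_loop {R} n a b c Kf z.
Arguments Bf {R} n.

(* The closed loop is the linear system [z' = M z] with [M = closed_loop_mx].
   By the matrix determinant lemma applied to the rank-one feedback term, for
   every [s] with [a(s) c(s) != 0] one gets
   [det (s - M) = det (s - (Af + Bf Kf)) * c(s)]: the filter states
   [(zeta, mu)] respond to [u] exactly as the state of [(Af, Bf)] does, both
   resolvents being multiples of the column of powers of [s].  Hence
   [char M = char (Af + Bf Kf) * c] and [M] is Hurwitz.
   A Hurwitz linear system is globally asymptotically stable: factor
   [char M = prod (X - r_k)] over [C]; by Cayley-Hamilton
   [Q (M - r_1) ... (M - r_k) = 0] with [Q = 1].  If [|P z(t)|^2] is bounded
   and tends to 0 for [P = Q (M - r_1)], then [Q M = r_1 Q + P] and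
   [Re r_1 < 0] give the differential inequality
   [d/dt |Q z|^2 <= Re r_1 |Q z|^2 + |P z|^2 / (- Re r_1)], which transfers both
   properties to [Q]. *)
From HB Require Import structures.
From mathcomp Require Import all_boot all_order all_algebra.
From mathcomp Require Import all_classical all_reals all_analysis.
From mathcomp Require Import complex.
From mathcomp Require Import ring lra zify.
Import Order.TTheory GRing.Theory Num.Theory.
Import numFieldNormedType.Exports.
Set Implicit Arguments. Unset Strict Implicit. Unset Printing Implicit Defensive.
Local Open Scope ring_scope.

Section Comparison.
Variable R : realType.

Lemma is_derive_expRM (sig t : R) :
  is_derive t 1 (fun s => expR (sig * s)) (sig * expR (sig * t)).
Proof.
have dM : is_derive t (1 : R) (fun s : R => sig * s) sig.
  by have := is_deriveZ sig (is_derive_id t (1 : R)); rewrite /= scaler1.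
by rewrite mulrC; exact: is_derive1_comp (is_derive_expR _) dM.
Qed.

Lemma expRNDx_le1 (x : R) : 0 <= x -> expR (- x) * (1 + x) <= 1.
Proof.
move=> x0; rewrite expRN mulrC ler_pdivrMr ?expR_gt0 // mul1r.
exact: expR_ge1Dx.
Qed.

Variables (f df k : R -> R) (sig : R).
Hypotheses (sig_gt0 : 0 < sig)
  (f_derive : forall t : R, 0 < t -> is_derive t 1 f (df t))
  (f_cvg0 : (f x @[x --> 0^'+] --> f 0)%classic)
  (f_dineq : forall t : R, 0 < t -> df t <= - sig * f t + k t).

Lemma cvg_at_right_of_derive (t0 : R) : 0 <= t0 -> (f x @[x --> t0^'+] --> f t0)%classic.
Proof.
rewrite le_eqVlt => /predU1P[<- // | t0_gt0]; apply: cvg_at_right_filter.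
have [df_t0 _] := f_derive t0_gt0.
exact/differentiable_continuous/derivable1_diffP.
Qed.

(* The weight [expR (sig * t)] turns the differential inequality into the
   monotonicity of [expR (sig * t) * (f t - K / sig)]. *)
Lemma comparison_bound (K t0 : R) : 0 <= t0 ->
  (forall t : R, t0 < t -> k t <= K) ->
  forall t : R, t0 <= t ->
  f t - K / sig <= expR (- (sig * (t - t0))) * (f t0 - K / sig).
Proof.
move=> t0_ge0 kK t t0t.
pose g s := expR (sig * s) * (f s - K / sig).
have dg (s : R) : 0 < s -> is_derive s 1 g
    (expR (sig * s) * df s + (f s - K / sig) * (sig * expR (sig * s))).
  move=> s_gt0.
  have dfK : is_derive s 1 (fun s => f s - K / sig) (df s).
    by rewrite -[df s]subr0; exact: is_deriveB (f_derive s_gt0) (is_derive_cst _ _ _).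
  exact: is_deriveM (is_derive_expRM sig s) dfK.
have dg_le0 (s : R) : s \in `]t0, +oo[ -> g^`()%classic s <= 0.
  rewrite in_itv /= andbT => t0s; have s_gt0 := le_lt_trans t0_ge0 t0s.
  rewrite derive1E (@derive_val _ _ _ _ _ _ _ (dg s s_gt0)).
  have := f_dineq s_gt0; have := kK s t0s; have := expR_gt0 (sig * s).
  set e := expR (sig * s) => e_gt0 ks dfs.
  have -> : e * df s + (f s - K / sig) * (sig * e) = e * (df s + sig * f s - K).
    by field; rewrite gt_eqF.
  by rewrite pmulr_rle0 //; lra.
have g_derivable (s : R) : s \in `]t0, +oo[ -> derivable g s 1.
  by rewrite in_itv /= andbT => t0s; case: (dg s (le_lt_trans t0_ge0 t0s)).
have g_cont : {within `[t0, +oo[, continuous g}%classic.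
  apply: derivable_oy_Rcontinuous_within_itvcy; split; first by move=> s /g_derivable.
  apply: cvgM; last by apply: cvgB; [exact: cvg_at_right_of_derive | exact: cvg_cst].
  apply: cvg_at_right_filter; have [dexp _] := is_derive_expRM sig t0.
  exact: differentiable_continuous ((derivable1_diffP _ _).1 dexp).
have := ler_wpM2l (ltW (expR_gt0 (- (sig * t))))
  (ler0_derive1_nincry g_derivable dg_le0 g_cont (lexx t0) t0t).
rewrite /g !mulrA -!expRD addNr expR0 mul1r => /le_trans; apply.
by rewrite (_ : - (sig * t) + sig * t0 = - (sig * (t - t0))) //; ring.
Qed.

Lemma comparison_le (K : R) : 0 <= K -> (forall t : R, 0 < t -> k t <= K) ->
  0 <= f 0 -> forall t : R, 0 <= t -> f t <= f 0 + K / sig.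
Proof.
move=> K_ge0 kK f0_ge0 t t_ge0.
have := comparison_bound (lexx 0) kK t_ge0; rewrite subr0.
have := expR_gt0 (- (sig * t)); have := divr_ge0 K_ge0 (ltW sig_gt0).
have : expR (- (sig * t)) <= 1 by rewrite expR_le1 oppr_le0 mulr_ge0 // ltW.
move: (expR _) (K / sig) => e Q; nra.
Qed.

Lemma comparison_eventually_le :
  (forall e : R, 0 < e -> exists T : R, forall t, T <= t -> k t <= e) ->
  forall e : R, 0 < e -> exists T : R, forall t, T <= t -> f t <= e.
Proof.
move=> k_small e e_gt0.
have [T1 kT1] := k_small (sig * e / 2) (divr_gt0 (mulr_gt0 sig_gt0 e_gt0) (ltr0Sn _ 1)).
pose t0 := Num.max T1 0 + 1.
have T1t0 : T1 < t0 by rewrite ltr_pwDr // le_max lexx.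
have t0_ge0 : 0 <= t0 by rewrite addr_ge0 // le_max lexx orbT.
have kt0 (t : R) : t0 < t -> k t <= sig * e / 2.
  by move=> t0t; apply/kT1/ltW/(lt_trans T1t0).
pose A := `|f t0 - e / 2|.
have A_ge0 : 0 <= A := normr_ge0 _.
have se_gt0 : 0 < sig * e by rewrite mulr_gt0.
exists (t0 + 2 * A / (sig * e)) => t tT.
have t0t : t0 <= t.
  by apply: le_trans tT; rewrite lerDl; apply: divr_ge0; [exact: mulr_ge0 | exact: ltW].
have := comparison_bound t0_ge0 kt0 t0t.
rewrite (_ : sig * e / 2 / sig = e / 2); last by field; rewrite gt_eqF.
set x := sig * (t - t0).
have x_ge0 : 0 <= x by rewrite mulr_ge0 ?subr_ge0 // ltW.
have Ax : 2 * A <= e * x.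
  rewrite (_ : e * x = (t - t0) * (sig * e)); last by rewrite /x; ring.
  by rewrite -ler_pdivrMr //; lra.
have EA : expR (- x) * (f t0 - e / 2) <= expR (- x) * A.
  by rewrite ler_wpM2l ?ler_norm // ltW ?expR_gt0.
have E_gt0 := expR_gt0 (- x); have E1 := expRNDx_le1 x_ge0.
move: (expR (- x)) EA E_gt0 E1 => E EA E_gt0 E1; nra.
Qed.

End Comparison.

Section MatrixCurves.
Variable R : realType.

Lemma is_derive_mx_entry (m n : nat) (phi : R -> 'M[R]_(m, n)) (t : R) d :
  is_derive t 1 phi d -> forall i j, is_derive t 1 (fun s => phi s i j) (d i j).
Proof.
move=> dphi i j; have phi_derivable : derivable phi t 1 by case: dphi.
apply: DeriveDef; first exact: (derivable_mxP phi t 1).1 phi_derivable i j.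
have := derive_mx phi_derivable; rewrite (@derive_val _ _ _ _ _ _ _ dphi).
by move=> /matrixP /(_ i j); rewrite mxE => <-.
Qed.

Lemma is_derive_mulmx_entry (p m n : nat) (U : 'M[R]_(p, m))
    (phi : R -> 'M[R]_(m, n)) (t : R) d i j :
  is_derive t 1 phi d -> is_derive t 1 (fun s => (U *m phi s) i j) ((U *m d) i j).
Proof.
move=> dphi.
have -> : (fun s => (U *m phi s) i j) = \sum_(k < m) (fun s => U i k * phi s k j).
  by rewrite fct_sumE; apply: funext => s; rewrite mxE.
rewrite mxE; apply: is_derive_sum => k.
exact: (is_deriveZ (U i k) (is_derive_mx_entry dphi k j)).
Qed.

Lemma cvg_sum (T : Type) (F : set_system T) (FF : Filter F) (I : Type)
    (r : seq I) (G : I -> T -> R) (l : I -> R) :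
  (forall i, (G i x @[x --> F] --> l i)%classic) ->
  (\sum_(i <- r) G i x @[x --> F] --> \sum_(i <- r) l i)%classic.
Proof.
move=> cvgG; elim: r => [|i r IHr].
  by rewrite big_nil; under eq_fun do rewrite big_nil; exact: cvg_cst.
by rewrite big_cons; under eq_fun do rewrite big_cons; exact: cvgD.
Qed.

Lemma cvg_mulmx_entry (p m n : nat) (U : 'M[R]_(p, m))
    (phi : R -> 'M[R]_(m, n)) (a : R) i j :
  (phi x @[x --> a^'+] --> phi a)%classic ->
  ((U *m phi x) i j @[x --> a^'+] --> (U *m phi a) i j)%classic.
Proof.
move=> cvg_phi; under eq_fun do rewrite mxE.
rewrite mxE; apply: cvg_sum => k; apply: cvgM; first exact: cvg_cst.
exact: continuous_cvg _ (@coord_continuous R m n k j (phi a)) cvg_phi.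
Qed.

Lemma mx_entry_le_norm (m n : nat) (x : 'M[R]_(m, n)) i j : `|x i j| <= `|x|.
Proof.
rewrite [leRHS]/Num.Def.normr /= mx_normrE.
exact: le_bigmax _ (fun ij : 'I_m * 'I_n => `|x ij.1 ij.2|) (i, j).
Qed.

Lemma mx_norm_le (m n : nat) (x : 'M[R]_(m, n)) (e : R) :
  0 <= e -> (forall i j, `|x i j| <= e) -> `|x| <= e.
Proof.
move=> e_ge0 xe; rewrite [leLHS]/Num.Def.normr /= mx_normrE.
by apply: bigmax_le => // -[i j] _; exact: xe.
Qed.

Lemma mx_norm_lt (m n : nat) (x : 'M[R]_(m, n)) (e : R) :
  0 < e -> (forall i j, `|x i j| < e) -> `|x| < e.
Proof.
move=> e_gt0 xe; rewrite [ltLHS]/Num.Def.normr /= mx_normrE.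
by apply: bigmax_lt => // -[i j] _; exact: xe.
Qed.

Definition mx_abs_sum (m n : nat) (W : 'M[R]_(m, n)) : R :=
  \sum_(i < m) \sum_(j < n) `|W i j|.

Lemma mx_abs_sum_ge0 (m n : nat) (W : 'M[R]_(m, n)) : 0 <= mx_abs_sum W.
Proof. by apply: sumr_ge0 => i _; apply: sumr_ge0. Qed.

Lemma sqr_mulmx_entry_le (m n p : nat) (W : 'M[R]_(m, n)) (x : 'M[R]_(n, p)) i j :
  (W *m x) i j ^+ 2 <= mx_abs_sum W ^+ 2 * `|x| ^+ 2.
Proof.
have Wx_le : `|(W *m x) i j| <= mx_abs_sum W * `|x|.
  rewrite mxE; apply: le_trans (ler_norm_sum _ _ _) _.
  apply: (@le_trans _ _ (\sum_(k < n) `|W i k| * `|x|)).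
    by apply: ler_sum => k _; rewrite normrM ler_wpM2l // mx_entry_le_norm.
  rewrite -mulr_suml ler_wpM2r // /mx_abs_sum (bigD1 i) //= lerDl.
  by apply: sumr_ge0 => k _; apply: sumr_ge0.
rewrite -exprMn -real_normK ?num_real // lerXn2r ?nnegrE ?mulr_ge0 ?mx_abs_sum_ge0 //.
Qed.

End MatrixCurves.

(* The derivative of [u ^+ 2 + v ^+ 2] along
   [u' = al u - be v + p], [v' = be u + al v + q]. *)
Definition rotation_sq_rate (R : pzRingType) (al be u v p q : R) : R :=
  2 * u * (al * u - be * v + p) + 2 * v * (be * u + al * v + q).

Lemma rotation_sq_rate_le (R : realFieldType) (al be u v p q : R) : al < 0 ->
  rotation_sq_rate al be u v p q <= al * (u ^+ 2 + v ^+ 2) + (p ^+ 2 + q ^+ 2) / - al.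
Proof.
move=> al_lt0; set sig := - al; have sig_gt0 : 0 < sig by rewrite oppr_gt0.
have -> : al = - sig by rewrite opprK.
set w := _ / sig; have sig_w : sig * w = p ^+ 2 + q ^+ 2 by rewrite mulrC divfK ?gt_eqF.
rewrite /rotation_sq_rate.
have := sqr_ge0 (sig * u - p); have := sqr_ge0 (sig * v - q); nra.
Qed.

Section StablePair.
Variables (R : realType) (N : nat) (M : 'M[R]_N).

Definition pair_sq (U V : 'M[R]_N) (phi : R -> 'cV[R]_N) i (t : R) : R :=
  (U *m phi t) i 0 ^+ 2 + (V *m phi t) i 0 ^+ 2.

(* [U] and [V] play the roles of the real and imaginary parts of a complex
   matrix [P]: [stable_pair U V] says that [P phi] is bounded in terms of
   [phi 0] and tends to 0, for every solution [phi] of [z' = M z]. *)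
Definition stable_pair (U V : 'M[R]_N) : Prop :=
  exists2 C : R, 0 <= C & forall phi, is_solution (fun z => M *m z) phi ->
    forall i, (forall t : R, 0 <= t -> pair_sq U V phi i t <= C * `|phi 0| ^+ 2) /\
      (forall e : R, 0 < e -> exists T : R, forall t, T <= t -> pair_sq U V phi i t <= e).

Lemma stable_pair0 : stable_pair 0 0.
Proof.
have sq0 phi i (t : R) : pair_sq 0 0 phi i t = 0.
  by rewrite /pair_sq mul0mx mxE expr0n addr0.
exists 0 => // phi _ i; split=> [t _ | e e_gt0]; first by rewrite sq0 mul0r.
by exists 0 => t _; rewrite sq0 ltW.
Qed.

Lemma is_derive_pair_sq (U V U' V' : 'M[R]_N) (al be : R) phi i (t : R) :
  U *m M = al *: U - be *: V + U' -> V *m M = be *: U + al *: V + V' ->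
  is_derive t 1 phi (M *m phi t) ->
  is_derive t 1 (pair_sq U V phi i) (rotation_sq_rate al be
    ((U *m phi t) i 0) ((V *m phi t) i 0) ((U' *m phi t) i 0) ((V' *m phi t) i 0)).
Proof.
move=> UM VM dphi; pose u s := (U *m phi s) i 0; pose v s := (V *m phi s) i 0.
have du : is_derive t 1 u (al * u t - be * v t + (U' *m phi t) i 0).
  apply: is_derive_eq; first exact: (is_derive_mulmx_entry U i 0 dphi).
  rewrite mulmxA UM !mulmxDl mulNmx -!scalemxAl /u /v.
  by move: (U *m _) (V *m _) (U' *m _) => X Y Z; rewrite !mxE.
have dv : is_derive t 1 v (be * u t + al * v t + (V' *m phi t) i 0).
  apply: is_derive_eq; first exact: (is_derive_mulmx_entry V i 0 dphi).
  rewrite mulmxA VM !mulmxDl -!scalemxAl /u /v.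
  by move: (U *m _) (V *m _) (V' *m _) => X Y Z; rewrite !mxE.
have duv := is_deriveD (is_deriveM du du) (is_deriveM dv dv).
have -> : pair_sq U V phi i = u * u + v * v.
  by apply: funext => s; rewrite /pair_sq !expr2.
apply: (is_derive_eq duv); rewrite /rotation_sq_rate /GRing.scale /u /v /=; ring.
Qed.

(* [U], [V], [U'], [V'] are the real and imaginary parts of [P] and [P'] in
   [P M = r P + P'], with [r = al + i be]. *)
Lemma stable_pair_step (U V U' V' : 'M[R]_N) (al be : R) : al < 0 ->
  U *m M = al *: U - be *: V + U' -> V *m M = be *: U + al *: V + V' ->
  stable_pair U' V' -> stable_pair U V.
Proof.
move=> al_lt0 UM VM [C' C'_ge0 stableUV'].
set sig := - al; have sig_gt0 : 0 < sig by rewrite oppr_gt0.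
exists (mx_abs_sum U ^+ 2 + mx_abs_sum V ^+ 2 + C' / sig ^+ 2).
  by rewrite !addr_ge0 ?sqr_ge0 // divr_ge0 // sqr_ge0.
move=> phi sol_phi i; have [bounded' small'] := stableUV' phi sol_phi i.
case: sol_phi => phi_derive phi_cvg0.
pose k s := pair_sq U' V' phi i s / sig.
pose df t := rotation_sq_rate al be ((U *m phi t) i 0) ((V *m phi t) i 0)
  ((U' *m phi t) i 0) ((V' *m phi t) i 0).
have f_derive (t : R) : 0 < t -> is_derive t 1 (pair_sq U V phi i) (df t).
  by move=> t_gt0; exact: is_derive_pair_sq UM VM (phi_derive t t_gt0).
have f_cvg0 : (pair_sq U V phi i x @[x --> 0^'+] --> pair_sq U V phi i 0)%classic.
  have cvgU := cvg_mulmx_entry (U := U) (i := i) (j := 0) phi_cvg0.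
  have cvgV := cvg_mulmx_entry (U := V) (i := i) (j := 0) phi_cvg0.
  exact: cvgD (cvgM cvgU cvgU) (cvgM cvgV cvgV).
have f_dineq (t : R) : 0 < t -> df t <= - sig * pair_sq U V phi i t + k t.
  by move=> _; rewrite /k /pair_sq opprK; exact: rotation_sq_rate_le.
split=> [t t_ge0 | e e_gt0].
  have k_le t' : 0 < t' -> k t' <= C' * `|phi 0| ^+ 2 / sig.
    by move=> t'_gt0; rewrite ler_pM2r ?invr_gt0 // bounded' // ltW.
  have K_ge0 : 0 <= C' * `|phi 0| ^+ 2 / sig.
    exact: divr_ge0 (mulr_ge0 C'_ge0 (sqr_ge0 _)) (ltW sig_gt0).
  have f0_ge0 : 0 <= pair_sq U V phi i 0 := addr_ge0 (sqr_ge0 _) (sqr_ge0 _).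
  apply: le_trans (comparison_le sig_gt0 f_derive f_cvg0 f_dineq K_ge0 k_le f0_ge0 t_ge0) _.
  rewrite (_ : C' * _ / sig / sig = C' / sig ^+ 2 * `|phi 0| ^+ 2); last by field; rewrite gt_eqF.
  by rewrite !mulrDl lerD2r lerD // sqr_mulmx_entry_le.
have k_small e' : 0 < e' -> exists T : R, forall t, T <= t -> k t <= e'.
  move=> e'_gt0; have [T small'T] := small' (e' * sig) (mulr_gt0 e'_gt0 sig_gt0).
  by exists T => t Tt; rewrite ler_pdivrMr // small'T.
exact: comparison_eventually_le sig_gt0 f_derive f_cvg0 f_dineq k_small e e_gt0.
Qed.

End StablePair.

Lemma GAS_of_stable_pair (R : realType) (N : nat) (M : 'M[R]_N) :
  stable_pair M 1 0 -> GAS (fun z => M *m z).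
Proof.
move=> [C C_ge0 stable1]; have C1_gt0 : 0 < C + 1 by rewrite ltr_wpDl.
have sqE phi i (t : R) : pair_sq 1 0 phi i t = `|phi t i 0| ^+ 2.
  by rewrite /pair_sq mul1mx mul0mx mxE expr0n addr0 real_normK ?num_real.
split=> [eps eps_gt0 | phi sol_phi].
  exists (eps / (C + 1)) => [|phi sol_phi phi0_lt t t_ge0]; first exact: divr_gt0.
  apply: mx_norm_lt => // i j; rewrite (ord1 j).
  have := (stable1 phi sol_phi i).1 t t_ge0; rewrite sqE.
  have : `|phi 0| * (C + 1) < eps by rewrite -ltr_pdivlMr.
  have := normr_ge0 (phi 0); have := normr_ge0 (phi t i 0).
  move: `|phi 0| `|phi t i 0| => a b b_ge0 a_ge0 a_lt b_le.
  have aC_ge0 : 0 <= a * (C + 1) by nra.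
  have : C * a ^+ 2 <= (a * (C + 1)) ^+ 2 by nra.
  have : (a * (C + 1)) ^+ 2 < eps ^+ 2 by nra.
  nra.
apply/cvgrPdist_lt => e e_gt0; have e2_gt0 : 0 < e / 2 by rewrite divr_gt0.
have small i : \forall t \near +oo, `|phi t i 0| <= e / 2.
  have [T smallT] := (stable1 phi sol_phi i).2 _ (exprn_gt0 2 e2_gt0).
  exists T; split; first by rewrite num_real.
  move=> t /ltW /smallT; rewrite sqE.
  have := normr_ge0 (phi t i 0); move: `|_| => b; nra.
near=> t; rewrite sub0r normrN; apply: le_lt_trans (_ : _ <= e / 2) _.
  apply: mx_norm_le => [|i j]; first exact: ltW.
  by rewrite (ord1 j); move: i; near: t; exact: filter_forall.
by rewrite ltr_pdivrMr // ltr_pMr // ltr1n.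
Unshelve. all: by end_near.
Qed.

Section ComplexParts.
Variable R : realType.
Local Notation Re_mx A := (map_mx (@complex.Re R) A).
Local Notation Im_mx A := (map_mx (@complex.Im R) A).
Local Notation cmx M := (map_mx (real_complex R) M).

Lemma Re_mx_mul_real (m n p : nat) (A : 'M[R[i]]_(m, n)) (M : 'M[R]_(n, p)) :
  Re_mx (A *m cmx M) = Re_mx A *m M.
Proof.
apply/matrixP => i j; rewrite !mxE raddf_sum; apply: eq_bigr => k _.
by rewrite !mxE; case: (A i k) => x y /=; rewrite mulr0 subr0.
Qed.

Lemma Im_mx_mul_real (m n p : nat) (A : 'M[R[i]]_(m, n)) (M : 'M[R]_(n, p)) :
  Im_mx (A *m cmx M) = Im_mx A *m M.
Proof.
apply/matrixP => i j; rewrite !mxE raddf_sum; apply: eq_bigr => k _.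
by rewrite !mxE; case: (A i k) => x y /=; rewrite mulr0 add0r.
Qed.

Lemma Re_mx_scale (m n : nat) (r : R[i]) (A : 'M[R[i]]_(m, n)) :
  Re_mx (r *: A) = complex.Re r *: Re_mx A - complex.Im r *: Im_mx A.
Proof. by apply/matrixP => i j; rewrite !mxE; case: r; case: (A i j). Qed.

Lemma Im_mx_scale (m n : nat) (r : R[i]) (A : 'M[R[i]]_(m, n)) :
  Im_mx (r *: A) = complex.Im r *: Re_mx A + complex.Re r *: Im_mx A.
Proof.
by apply/matrixP => i j; rewrite !mxE; case: r => a b; case: (A i j) => x y /=; rewrite addrC mulrC.
Qed.

Variables (N : nat) (M : 'M[R]_N.+1).

Lemma hurwitz_mx_annihilator : hurwitz_mx M ->
  exists2 rs : seq R[i], (forall r, r \in rs -> complex.Re r < 0)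
    & \prod_(r <- rs) (cmx M - r%:M) = 0.
Proof.
move=> hurwitzM; have [rs charE] := closed_field_poly_normal (char_poly (cmx M)).
rewrite (monicP (char_poly_monic _)) scale1r in charE.
exists rs => [r r_rs | ].
  apply: hurwitzM; rewrite /cpoly (map_char_poly (real_complex R)).
  by rewrite charE root_prod_XsubC.
rewrite -(Cayley_Hamilton (cmx M)) charE rmorph_prod; apply: eq_bigr => r _.
by rewrite rmorphB /= horner_mx_X horner_mx_C.
Qed.

Lemma stable_pair_parts (rs : seq R[i]) :
  (forall r, r \in rs -> complex.Re r < 0) ->
  forall Q : 'M[R[i]]_N.+1, Q * \prod_(r <- rs) (cmx M - r%:M) = 0 ->
  stable_pair M (Re_mx Q) (Im_mx Q).
Proof.
elim: rs => [_ Q | r rs IHrs Re_lt0 Q].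
  by rewrite big_nil mulr1 => ->; rewrite !map_mx0; exact: stable_pair0.
have Re_lt0' s : s \in rs -> complex.Re s < 0.
  by move=> s_rs; apply: Re_lt0; rewrite inE s_rs orbT.
rewrite big_cons mulrA => /(IHrs Re_lt0') stable'.
have QM : Q *m cmx M = r *: Q + Q * (cmx M - r%:M).
  by rewrite mulrBr -mulmxE mul_mx_scalar addrC subrK.
apply: (stable_pair_step (Re_lt0 r (mem_head _ _)) _ _ stable').
- by rewrite -Re_mx_mul_real QM map_mxD Re_mx_scale.
- by rewrite -Im_mx_mul_real QM map_mxD Im_mx_scale.
Qed.

End ComplexParts.

Theorem hurwitz_mx_GAS (R : realType) (N : nat) (M : 'M[R]_N) :
  hurwitz_mx M -> GAS (fun z => M *m z).
Proof.
case: N M => [M _ | N M /hurwitz_mx_annihilator [rs Re_lt0 annih]].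
  split=> [eps eps_gt0 | phi _]; first by exists 1 => // phi _ _ t _; rewrite flatmx0 normr0.
  by rewrite (_ : phi = fun=> 0); [exact: cvg_cst | apply: funext => t; exact: flatmx0].
apply: GAS_of_stable_pair.
have Re1 : map_mx (@complex.Re R) (1 : 'M[R[i]]_N.+1) = 1.
  by apply/matrixP => i j; rewrite !mxE; case: (i == j).
have Im1 : map_mx (@complex.Im R) (1 : 'M[R[i]]_N.+1) = 0.
  by apply/matrixP => i j; rewrite !mxE; case: (i == j).
by rewrite -Re1 -Im1; apply: stable_pair_parts Re_lt0 _ (etrans (mul1r _) annih).
Qed.

Lemma det_sub_rank1 (R : fieldType) (m : nat) (X : 'M[R]_m) (u : 'cV[R]_m) (w : 'rV[R]_m) :
  X \in unitmx -> \det (X - u *m w) = \det X * (1 - (w *m invmx X *m u) 0 0).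
Proof.
move=> X_unit.
have E1 : block_mx (1 : 'M[R]_1) w u X = block_mx 1 0 u 1 *m block_mx 1 w 0 (X - u *m w).
  by rewrite mulmx_block ?mul1mx ?mul0mx ?mulmx1 ?mulmx0 ?addr0 ?add0r addrC subrK.
have E2 : block_mx (1 : 'M[R]_1) w u X =
    block_mx (1 - w *m invmx X *m u) (w *m invmx X) 0 1 *m block_mx 1 0 u X.
  rewrite mulmx_block ?mul1mx ?mul0mx ?mulmx1 ?mulmx0 ?addr0 ?add0r subrK.
  by rewrite -mulmxA mulVmx // mulmx1.
have := congr1 determinant E1; rewrite E2 !det_mulmx !det_lblock !det_ublock.
by rewrite !det1 !mul1r !mulr1 det_mx11 => <-; rewrite mulrC !mxE.
Qed.

Lemma horner_char_poly (R : comNzRingType) (m : nat) (X : 'M[R]_m) (s : R) :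
  (char_poly X).[s] = \det (s%:M - X).
Proof.
rewrite /char_poly -horner_evalE -det_map_mx; congr (\det _).
apply/matrixP => i j; rewrite !mxE /= horner_evalE.
by rewrite hornerD hornerN hornerMn hornerX hornerC.
Qed.

(* Otherwise [(p - q) * d] would be a nonzero polynomial vanishing at every
   natural number. *)
Lemma eq_poly_off_roots (R : numDomainType) (p q d : {poly R}) : d != 0 ->
  (forall s, d.[s] != 0 -> p.[s] = q.[s]) -> p = q.
Proof.
move=> d_neq0 pq; apply/eqP; rewrite -subr_eq0; apply/negPn/negP => pq_neq0.
pose r := (p - q) * d; have r_neq0 : r != 0 by rewrite mulf_neq0.
have r_root : all (root r) [seq (i%:R : R) | i <- iota 0 (size r)].
  apply/allP => x _; rewrite /root /r hornerM hornerD hornerN.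
  have [-> | dx] := eqVneq d.[x] 0; first by rewrite mulr0.
  by rewrite pq // subrr mul0r.
have uniq_nat : uniq [seq (i%:R : R) | i <- iota 0 (size r)].
  by rewrite map_inj_uniq ?iota_uniq // => i j /eqP; rewrite eqr_nat => /eqP.
by have := max_poly_roots r_neq0 r_root uniq_nat; rewrite size_map size_iota ltnn.
Qed.

Lemma hurwitz_polyM (R : realType) (p q : {poly R}) :
  hurwitz_poly p -> hurwitz_poly q -> hurwitz_poly (p * q).
Proof.
move=> hp hq z; rewrite /cpoly (_ : (fun x : R => x%:C%C) = real_complex R) //.
by rewrite rmorphM rootM => /orP[]; [exact: hp | exact: hq].
Qed.

Lemma sub_block_mx (R : pzRingType) (m1 m2 : nat) (s : R) (P : 'M[R]_m1) Q Q'
    (S : 'M[R]_m2) :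
  s%:M - block_mx P Q Q' S = block_mx (s%:M - P) (- Q) (- Q') (s%:M - S).
Proof. by rewrite scalar_mx_block opp_block_mx add_block_mx !sub0r. Qed.

Section Companion.
Variable R : realType.

Lemma sum_nat1_rev (n : nat) (F : nat -> {poly R}) :
  \sum_(1 <= k < n.+1) F k = \sum_(i < n) F (n - i)%N.
Proof.
rewrite big_nat_rev big_add1 /= big_mkord; apply: eq_bigr => i _.
by congr F; have := ltn_ord i; lia.
Qed.

Lemma den_polyE (n : nat) (c : nat -> R) :
  den_poly n c = 'X^n + \poly_(i < n) c (n - i)%N.
Proof.
rewrite /den_poly sum_nat1_rev poly_def; congr (_ + _); apply: eq_bigr => i _.
by rewrite mul_polyC subKn // ltnW.
Qed.

Lemma size_den_poly (n : nat) (c : nat -> R) : size (den_poly n c) = n.+1.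
Proof.
by rewrite den_polyE size_polyDl size_polyXn // (leq_ltn_trans (size_poly _ _)).
Qed.

Lemma den_poly_monic (n : nat) (c : nat -> R) : den_poly n c \is monic.
Proof.
apply/monicP; rewrite den_polyE lead_coefDl ?lead_coefXn // size_polyXn.
exact: leq_ltn_trans (size_poly _ _) _.
Qed.

Lemma coef_den_poly (n : nat) (c : nat -> R) j :
  (j < n)%N -> (den_poly n c)`_j = c (n - j)%N.
Proof.
by move=> jn; rewrite den_polyE coefD coefXn coef_poly jn (ltn_eqF jn) add0r.
Qed.

Lemma horner_den_poly (n : nat) (c : nat -> R) (s : R) :
  (den_poly n c).[s] = s ^+ n + \sum_(i < n) c (n - i)%N * s ^+ i.
Proof.
rewrite den_polyE hornerD hornerXn poly_def horner_sum; congr (_ + _).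
by apply: eq_bigr => i _; rewrite hornerZ hornerXn.
Qed.

Lemma horner_num_poly (n : nat) (b : nat -> R) (s : R) :
  (num_poly n b).[s] = \sum_(i < n) b (n - i)%N * s ^+ i.
Proof.
rewrite /num_poly sum_nat1_rev horner_sum; apply: eq_bigr => i _.
by rewrite hornerM hornerC hornerXn subKn // ltnW.
Qed.

Lemma char_poly_castmx (p : {poly R}) (n : nat) (e : (size p).-1 = n) :
  char_poly (castmx (e, e) (companionmx p)) = char_poly (companionmx p).
Proof. by case: n / e. Qed.

Lemma char_poly_comp_mx (n : nat) (c : nat -> R) :
  char_poly (comp_mx n c) = den_poly n c.
Proof.
have e : (size (den_poly n c)).-1 = n by rewrite size_den_poly.
have -> : comp_mx n c = castmx (e, e) (companionmx (den_poly n c)).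
  apply/matrixP => i j; rewrite castmxE !mxE /= size_den_poly /=.
  by case: ifP => _; [rewrite coef_den_poly | rewrite eq_sym; case: (_ == _)].
by rewrite char_poly_castmx companionmxK // den_poly_monic.
Qed.

End Companion.

Section CanonicalForms.
Variables (R : realType) (n : nat) (s : R).
Hypothesis n_gt0 : (0 < n)%N.

Definition powers_col : 'cV[R]_n := \col_(i < n) s ^+ i.

Definition coef_row (b : nat -> R) : 'rV[R]_n := \row_(j < n) b (n - j)%N.

Lemma comp_mx_powers (c : nat -> R) :
  (s%:M - comp_mx n c) *m powers_col = (den_poly n c).[s] *: Br R n.
Proof.
apply/matrixP => i k; rewrite (ord1 k) !mxE horner_den_poly.
under eq_bigr do rewrite !mxE mulrBl.
rewrite sumrB (bigD1 i) //= eqxx mulr1n big1 ?addr0 => [|j ji]; last first.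
  by rewrite eq_sym (negPf ji) mulr0n mul0r.
have [i_last | i_nlast] := eqVneq (i : nat) n.-1.
  under eq_bigr do rewrite mulNr.
  by rewrite sumrN opprK mulr1 -exprS i_last prednK.
have i1_lt : (i.+1 < n)%N by move: (ltn_ord i) i_nlast; lia.
rewrite mulr0 (bigD1 (Ordinal i1_lt)) //= eqxx mul1r big1 => [|j ji].
  by rewrite addr0 -exprS subrr.
case: eqP => [ij | _]; last by rewrite mul0r.
by case/eqP: ji; apply: val_inj.
Qed.

Lemma comp_mx_resolvent (c : nat -> R) : (den_poly n c).[s] != 0 ->
  (s%:M - comp_mx n c) *m ((den_poly n c).[s]^-1 *: powers_col) = Br R n.
Proof.
by move=> dc_neq0; rewrite -scalemxAr comp_mx_powers scalerA mulVf // scale1r.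
Qed.

Lemma det_sub_comp_mx (c : nat -> R) : \det (s%:M - comp_mx n c) = (den_poly n c).[s].
Proof. by rewrite -horner_char_poly char_poly_comp_mx. Qed.

Lemma sub_Amat_tr (a : nat -> R) : s%:M - Amat n a = (s%:M - comp_mx n a)^T.
Proof.
by rewrite linearB /= tr_scalar_mx; congr (_ - _); apply/matrixP => i j; rewrite !mxE.
Qed.

Lemma det_sub_Amat (a : nat -> R) : \det (s%:M - Amat n a) = (den_poly n a).[s].
Proof. by rewrite sub_Amat_tr det_tr det_sub_comp_mx. Qed.

Lemma powers_Amat (a : nat -> R) :
  powers_col^T *m (s%:M - Amat n a) = (den_poly n a).[s] *: Cmat R n.
Proof.
rewrite sub_Amat_tr -trmx_mul comp_mx_powers linearZ; congr (_ *: _).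
by apply/matrixP => i j; rewrite !mxE.
Qed.

Lemma coef_row_powers (b : nat -> R) :
  coef_row b *m powers_col = ((num_poly n b).[s])%:M.
Proof.
apply/matrixP => i j; rewrite (ord1 i) (ord1 j) !mxE /= mulr1n horner_num_poly.
by apply: eq_bigr => k _; rewrite !mxE.
Qed.

Lemma Lb_Br (b : nat -> R) : Lb n b = Br R n *m coef_row b.
Proof.
apply/matrixP => i j; rewrite !mxE big_ord1 !mxE.
by case: (_ == _); rewrite ?mul1r ?mul0r.
Qed.

Lemma powers_Bmat (b : nat -> R) : powers_col^T *m Bmat n b = coef_row b *m powers_col.
Proof.
apply/matrixP => i j; rewrite !mxE; apply: eq_bigr => k _.
by rewrite !mxE mulrC.
Qed.

Lemma obs_transfer (a b : nat -> R) : (den_poly n a).[s] != 0 ->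
  Cmat R n *m (invmx (s%:M - Amat n a) *m Bmat n b) =
  ((num_poly n b).[s] / (den_poly n a).[s])%:M.
Proof.
move=> dA_neq0; have dA_unit : s%:M - Amat n a \in unitmx.
  by rewrite unitmxE unitfE det_sub_Amat.
have -> : Cmat R n = (den_poly n a).[s]^-1 *: (powers_col^T *m (s%:M - Amat n a)).
  by rewrite powers_Amat scalerA mulVf // scale1r.
rewrite -scalemxAl -mulmxA mulKVmx // powers_Bmat coef_row_powers.
by rewrite scale_scalar_mx mulrC.
Qed.

End CanonicalForms.

Section ClosedLoop.
Variables (R : realType) (n : nat) (a b c : nat -> R) (Kf : 'M[R]_(1, n + n)).
Hypothesis n_gt0 : (0 < n)%N.

Definition open_loop_mx : 'M[R]_(n + (n + n)) :=
  block_mx (Amat n a) 0 (col_mx 0 (Br R n *m Cmat R n)) (block_mx (Ar n c) 0 0 (Ar n c)).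

Definition input_col : 'cV[R]_(n + (n + n)) := col_mx (Bmat n b) (col_mx (Br R n) 0).

Definition closed_loop_mx : 'M[R]_(n + (n + n)) :=
  open_loop_mx + input_col *m row_mx 0 Kf.

Lemma closed_loopE : closed_loop n a b c Kf = mulmx closed_loop_mx.
Proof.
apply: funext => z; rewrite /closed_loop /=.
rewrite -[z in RHS]vsubmxK -[dsubmx z in RHS]vsubmxK.
move: (usubmx z) (usubmx (dsubmx z)) (dsubmx (dsubmx z)) => x zeta mu.
rewrite /closed_loop_mx mulmxDl !mul_block_col !mul_col_mx !mul0mx !addr0 !add0r.
rewrite -!mulmxA mul_row_col mul0mx !add0r !add_col_mx !add0r addr0.
by rewrite [Br R n *m _ + _]addrC.
Qed.

Section Resolvents.
Variable s : R.
Let dA := (den_poly n a).[s].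
Let dc := (den_poly n c).[s].
Let v := powers_col n s.
Let g := (num_poly n b).[s] / (dA * dc).
Hypotheses (dA_neq0 : dA != 0) (dc_neq0 : dc != 0).

Lemma det_sub_open_loop : \det (s%:M - open_loop_mx) = dA * (dc * dc).
Proof.
by rewrite !sub_block_mx !oppr0 !det_lblock det_sub_Amat det_sub_comp_mx.
Qed.

Lemma det_sub_Af : \det (s%:M - Af n a b c) = dc * dA.
Proof. by rewrite sub_block_mx oppr0 det_lblock !det_sub_comp_mx. Qed.

Lemma unitmx_sub_Af : s%:M - Af n a b c \in unitmx.
Proof. by rewrite unitmxE unitfE det_sub_Af mulf_neq0. Qed.

Lemma unitmx_sub_open_loop : s%:M - open_loop_mx \in unitmx.
Proof. by rewrite unitmxE unitfE det_sub_open_loop !mulf_neq0. Qed.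

Lemma Af_resolvent :
  invmx (s%:M - Af n a b c) *m Bf n = col_mx (dc^-1 *: v) (g *: v).
Proof.
apply: (canLR (mulKmx unitmx_sub_Af)).
rewrite sub_block_mx oppr0 mul_block_col mul0mx addr0 comp_mx_resolvent //.
rewrite /Bf; congr col_mx; apply/esym/eqP; rewrite mulNmx addrC subr_eq0 /Aa.
rewrite -scalemxAr comp_mx_powers // Lb_Br -mulmxA -scalemxAr coef_row_powers.
rewrite -scalemxAr mul_mx_scalar !scalerA; apply/eqP; congr (_ *: _).
by rewrite /g /dA /dc; field; apply/andP.
Qed.

Lemma open_loop_resolvent : invmx (s%:M - open_loop_mx) *m input_col =
  col_mx (invmx (s%:M - Amat n a) *m Bmat n b) (col_mx (dc^-1 *: v) (g *: v)).
Proof.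
have unit_A : s%:M - Amat n a \in unitmx by rewrite unitmxE unitfE det_sub_Amat.
apply: (canLR (mulKmx unitmx_sub_open_loop)).
rewrite !sub_block_mx !oppr0 !mul_block_col !mul0mx !addr0 !add0r mulKVmx //.
rewrite /Ar comp_mx_resolvent // mulNmx mul_col_mx mul0mx opp_col_mx oppr0 add_col_mx add0r.
congr (col_mx _ (col_mx _ _)); apply/esym/eqP; rewrite addrC subr_eq0.
rewrite -mulmxA obs_transfer // mul_mx_scalar -scalemxAr comp_mx_powers // scalerA.
by apply/eqP; congr (_ *: _); rewrite /g /dA /dc; field; apply/andP.
Qed.

Lemma horner_char_closed_loop :
  (char_poly closed_loop_mx).[s] = (char_poly (Af n a b c + Bf n *m Kf)).[s] * dc.
Proof.
rewrite !horner_char_poly /closed_loop_mx !opprD !addrA.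
rewrite !det_sub_rank1 ?unitmx_sub_open_loop ?unitmx_sub_Af //.
rewrite det_sub_open_loop det_sub_Af -!mulmxA open_loop_resolvent Af_resolvent.
by rewrite mul_row_col mul0mx add0r; ring.
Qed.

End Resolvents.

Lemma char_poly_closed_loop :
  char_poly closed_loop_mx = char_poly (Af n a b c + Bf n *m Kf) * den_poly n c.
Proof.
apply: (@eq_poly_off_roots _ _ _ (den_poly n a * den_poly n c)).
  by rewrite mulf_neq0 // monic_neq0 // den_poly_monic.
move=> s; rewrite hornerM mulf_eq0 negb_or => /andP[dA_neq0 dc_neq0].
by rewrite hornerM horner_char_closed_loop.
Qed.

End ClosedLoop.

Unset Implicit Arguments.

Theorem corollary1 (R : realType) (n : nat) (a b c : nat -> R)
  (Kf : 'M[R]_(1, n + n)) :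
  (1 <= n)%N ->
  coprimep (den_poly n a) (num_poly n b) ->
  hurwitz_mx (Af n a b c + Bf n *m Kf) ->
  hurwitz_poly (den_poly n c) ->
  GAS (closed_loop n a b c Kf).
Proof.
(* Coprimality is what makes a stabilizing [Kf] exist; once one is given it
   plays no further role. *)
move=> n_gt0 _ hurwitz_Af hurwitz_c.
rewrite closed_loopE; apply: hurwitz_mx_GAS.
by rewrite /hurwitz_mx char_poly_closed_loop //; exact: hurwitz_polyM.
Qed.
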